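(* Let $\mathcal V$ be a finite set, let $P_h$ and $\pi$ be probability distributions on $\mathcal V$, and set $q := 1-\max_{x\in\mathcal V}P_h(x)$. Then: (i) For every subset $A\subseteq\mathcal V$, $$\pi(A)-P_h(A)\;\le\;\sup\Bigl\{\lambda\in[0,1]:\ d_{\mathrm{kl}}(\lambda\,\|\,q)\le D_{\mathrm{KL}}(\pi\,\|\,P_h)\Bigr\}.$$ (ii) For every fixed $C\ge 0$, $$\lim_{q\to 0}\ \sup_{\pi:\,D_{\mathrm{KL}}(\pi\|P_h)\le C}\ \sup_{A\subseteq\mathcal V}\bigl(\pi(A)-P_h(A)\bigr)=0,$$ in the uniform sense: for every $\varepsilon>0$ there is $\eta>0$ such that for every distribution $P_h$ on $\mathcal V$ with $1-\max_{x}P_h(x)<\eta$, every distribution $\pi$ on $\mathcal V$ with $D_{\mathrm{KL}}(\pi\|P_h)\le C$, and every $A\subseteq\mathcal V$, one has $\pi(A)-P_h(A)\le\varepsilon$.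
   Context: For distributions on a finite set, $\pi(A)=\sum_{x\in A}\pi(x)$ and $D_{\mathrm{KL}}(\pi\|P_h)=\sum_x \pi(x)\log\frac{\pi(x)}{P_h(x)}\in[0,+\infty]$. The binary KL divergence is $d_{\mathrm{kl}}(p\|q):=p\log\frac{p}{q}+(1-p)\log\frac{1-p}{1-q}$ for $p,q\in[0,1]$, with the conventions $0\log(0/q):=0$ for $q\in[0,1]$ (including $0\log(0/0)=0$) and $b\log(b/0):=+\infty$ for $b>0$. (In the paper, $P_h=P_h(\cdot\mid h_t)$ is a human-like next-token distribution given a history $h_t$, $\pi=\pi_\theta(\cdot\mid h_t)$ is a policy's next-token distribution, and $q$ is called the local capacity mass.) *)

From HB Require Import structures.
From mathcomp Require Import all_boot all_order all_algebra.
From mathcomp Require Import all_classical all_reals all_analysis.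
Set Implicit Arguments. Unset Strict Implicit. Unset Printing Implicit Defensive.
Import Order.TTheory GRing.Theory Num.Theory.
Local Open Scope ring_scope.

Section Defs.
Variables (R : realType).

Definition is_dist (V : finType) (p : V -> R) : Prop :=
  (forall x, 0 <= p x) /\ \sum_(x : V) p x = 1.

Definition massof (V : finType) (p : V -> R) (A : {set V}) : R :=
  \sum_(x in A) p x.

(* max_x P(x) (P nonnegative, so 0 is a neutral start) *)
Definition pmax (V : finType) (p : V -> R) : R :=
  \big[Num.max/0]_(x : V) p x.

Definition xlogxy (a b : R) : \bar R :=
  if a == 0 then 0%E
  else if b == 0 then +oo%E
  else (a * ln (a / b))%:E.

Definition dkl (p q : R) : \bar R :=
  (xlogxy p q + xlogxy (1 - p) (1 - q))%E.

Definition KL (V : finType) (pi P : V -> R) : \bar R :=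
  (\sum_(x : V) xlogxy (pi x) (P x))%E.

End Defs.

(* Coarse-graining by a randomized test [w : V -> [0, 1]] cannot increase relative
   entropy (log-sum inequality), so [d_kl(pi[w] || P[w]) <= D_KL(pi || P)] for the
   means [pi[w]], [P[w]] of [w].  If [l = pi(A) - P(A)] exceeds [q = 1 - max P],
   then [P(A) <= q], and an affine test [t + s 1_A] has mean [q] under [P] and mean
   [l] under [pi]; hence [l] lies in the set whose supremum is taken in (i).  For
   (ii), [d_kl(l || q) >= l log (1/q) - 1], which exceeds [C] once [l > eps] and
   [q < exp (-(C + 1) / eps)]. *)

From HB Require Import structures.
From mathcomp Require Import all_boot all_order all_algebra.
From mathcomp Require Import all_classical all_reals all_analysis.
From mathcomp Require Import ring lra.
Import Order.TTheory GRing.Theory Num.Theory.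
Set Implicit Arguments. Unset Strict Implicit. Unset Printing Implicit Defensive.
Local Open Scope ring_scope.

Section KLTerm.
Variable R : realType.
Implicit Types a b c l q : R.

Definition klterm a b : R := if a == 0 then 0 else a * ln (a / b).

Lemma xlogxy_klterm a b : 0 <= a -> (0 < a -> 0 < b) ->
  xlogxy a b = (klterm a b)%:E.
Proof.
rewrite /xlogxy /klterm => a0 ab; have [//|an0] := eqVneq a 0.
by rewrite gt_eqF // ab // lt0r an0.
Qed.

Lemma xlogxy_neqNy a b : xlogxy a b != -oo%E.
Proof. by rewrite /xlogxy; case: ifP => //; case: ifP. Qed.

(* [ln y <= y - 1] at [y = b c / a]; the case [c = a / b] is an equality. *)
Lemma klterm_ge_affine a b c : 0 <= a -> 0 <= b -> (0 < a -> 0 < b) -> 0 < c ->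
  a * ln c + a - b * c <= klterm a b.
Proof.
move=> a0 b0 ab c0; rewrite /klterm; have [->|an0] := eqVneq a 0.
  by rewrite mul0r !add0r oppr_le0 mulr_ge0 // ltW.
have apos : 0 < a by rewrite lt0r an0.
have bpos := ab apos.
have y0 : 0 < b * c / a by rewrite divr_gt0 // mulr_gt0.
have ln_le : ln (b * c / a) <= b * c / a - 1.
  by rewrite -{1}(subrKC 1 (b * c / a)) le_ln1Dx // ltrBrDl subrr.
have lnE : ln (b * c / a) = ln c - ln (a / b).
  rewrite -ln_div ?posrE ?divr_gt0 //; congr ln; field.
  by rewrite !gt_eqF.
have rhsE : a * (b * c / a - 1) = b * c - a by field; rewrite gt_eqF.
rewrite lnE -(ler_pM2l apos) rhsE in ln_le.
lra.
Qed.

Lemma dklE l q : 0 <= l <= 1 -> (0 < l -> 0 < q) -> (l < 1 -> q < 1) ->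
  dkl l q = (klterm l q + klterm (1 - l) (1 - q))%:E.
Proof.
move=> /andP[l0 l1] lq lq1; rewrite /dkl !xlogxy_klterm ?subr_ge0 //.
by rewrite !subr_gt0.
Qed.

(* Take [c = 1/q] for the first term and [c = 1] for the second. *)
Lemma dkl_ge_log_inv l q : 0 <= l <= 1 -> 0 < q < 1 ->
  - (l * ln q) - 1 <= klterm l q + klterm (1 - l) (1 - q).
Proof.
move=> /andP[l0 l1] /andP[q0 q1].
have hl : l * ln q^-1 + l - q * q^-1 <= klterm l q.
  by apply: klterm_ge_affine => //; rewrite ?invr_gt0 // ltW.
have hr : (1 - l) * ln 1 + (1 - l) - (1 - q) * 1 <= klterm (1 - l) (1 - q).
  by apply: klterm_ge_affine => //; rewrite ?subr_ge0 ?subr_gt0 // ltW.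
rewrite lnV ?posrE // divff ?gt_eqF // in hl.
rewrite ln1 in hr.
lra.
Qed.

End KLTerm.

Section Divergence.
Variables (R : realType) (V : finType).
Implicit Types (pi P p w : V -> R) (A : {set V}).

Definition abs_cont pi P := forall x, 0 < pi x -> 0 < P x.

Lemma KL_abs_cont pi P : (forall x, 0 <= pi x) -> abs_cont pi P ->
  KL pi P = (\sum_x klterm (pi x) (P x))%:E.
Proof.
move=> pi0 piP; rewrite /KL -sumEFin; apply: eq_bigr => x _.
exact: xlogxy_klterm (pi0 x) (piP x).
Qed.

Lemma KL_not_abs_cont pi P : (forall x, 0 <= P x) -> ~ abs_cont pi P ->
  KL pi P = +oo%E.
Proof.
move=> P0 not_piP.
have [x [pix Px]] : exists x, 0 < pi x /\ P x = 0.
  apply: contrapT => no_x; apply: not_piP => x pix.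
  rewrite lt0r P0 andbT; apply/eqP => Px; apply: no_x; by exists x.
apply/esum_eqyP => [i _|]; first exact: xlogxy_neqNy.
by exists x; split => //; rewrite /xlogxy gt_eqF // Px eqxx.
Qed.

Lemma abs_cont_wsum pi P w : (forall x, 0 <= pi x) -> (forall x, 0 <= P x) ->
  (forall x, 0 <= w x) -> abs_cont pi P ->
  0 < \sum_x w x * pi x -> 0 < \sum_x w x * P x.
Proof.
move=> pi0 P0 w0 piP.
have wpi0 x : 0 <= w x * pi x by apply: mulr_ge0.
have wP0 x : 0 <= w x * P x by apply: mulr_ge0.
move=> /lt0r_neq0/eqP/(psumr_neq0P (fun x _ => wpi0 x))[x /= wpix].
have wx : 0 < w x.
  by rewrite lt0r w0 andbT; apply: contraTneq wpix => ->; rewrite mul0r ltxx.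
have pix : 0 < pi x by rewrite -(pmulr_rgt0 _ wx).
rewrite (bigD1 x) //= ltr_wpDr ?sumr_ge0 //.
by rewrite pmulr_rgt0 // piP.
Qed.

(* Compare each term with the tangent bound at the common ratio [c = a / b]. *)
Lemma log_sum_le pi P w : (forall x, 0 <= pi x) -> (forall x, 0 <= P x) ->
  (forall x, 0 <= w x) -> abs_cont pi P ->
  klterm (\sum_x w x * pi x) (\sum_x w x * P x)
    <= \sum_x w x * klterm (pi x) (P x).
Proof.
move=> pi0 P0 w0 piP.
have wpi0 x : 0 <= w x * pi x by apply: mulr_ge0.
have wP0 x : 0 <= w x * P x by apply: mulr_ge0.
set a := \sum_x w x * pi x; set b := \sum_x w x * P x.
have a0 : 0 <= a by apply: sumr_ge0.
have [a_eq0|a_neq0] := eqVneq a 0.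
  rewrite /klterm a_eq0 eqxx big1 // => x _.
  have /eqP := psumr_eq0P (fun x _ => wpi0 x) a_eq0 (i := x) isT.
  by rewrite mulf_eq0 => /orP[/eqP->|/eqP->]; rewrite ?mul0r ?eqxx ?mulr0.
have a_gt0 : 0 < a by rewrite lt0r a_neq0.
have b_gt0 : 0 < b by apply: abs_cont_wsum.
set c := a / b.
have c_gt0 : 0 < c by rewrite divr_gt0.
have -> : klterm a b = \sum_x w x * (pi x * ln c + pi x - P x * c).
  under eq_bigr do rewrite mulrBr mulrDr mulrA mulrA.
  rewrite sumrB big_split /= -!mulr_suml -/a -/b /c mulrCA divff ?gt_eqF //.
  by rewrite mulr1 addrK /klterm (negbTE a_neq0).
apply: ler_sum => x _; rewrite ler_wpM2l //.
by apply: klterm_ge_affine => //; apply: piP.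
Qed.

Lemma sum_compl_weight pi w : \sum_x pi x = 1 ->
  \sum_x (1 - w x) * pi x = 1 - \sum_x w x * pi x.
Proof.
move=> pi1; under eq_bigr do rewrite mulrBl mul1r.
by rewrite sumrB pi1.
Qed.

Lemma dkl_wsum_le_KL pi P w : is_dist pi -> is_dist P ->
  (forall x, 0 <= w x <= 1) ->
  (dkl (\sum_x w x * pi x) (\sum_x w x * P x) <= KL pi P)%E.
Proof.
move=> [pi0 pi1] [P0 P1] w01.
have [piP|not_piP] := pselect (abs_cont pi P); last first.
  by rewrite KL_not_abs_cont // leey.
have w0 x : 0 <= w x by case/andP: (w01 x).
have w'0 x : 0 <= 1 - w x by case/andP: (w01 x); rewrite subr_ge0.
have a0 : 0 <= \sum_x w x * pi x by apply: sumr_ge0 => x _; apply: mulr_ge0.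
have a1 : \sum_x w x * pi x <= 1.
  rewrite -subr_ge0 -(sum_compl_weight w pi1).
  by apply: sumr_ge0 => x _; apply: mulr_ge0.
rewrite dklE ?a0 ?a1 //; last 2 first.
- exact: abs_cont_wsum.
- move=> a_lt1; rewrite -subr_gt0 -(sum_compl_weight w P1).
  by apply: abs_cont_wsum; rewrite // sum_compl_weight // subr_gt0.
rewrite KL_abs_cont // lee_fin -(sum_compl_weight w pi1) -(sum_compl_weight w P1).
have -> : \sum_x klterm (pi x) (P x) = \sum_x w x * klterm (pi x) (P x)
    + \sum_x (1 - w x) * klterm (pi x) (P x).
  by rewrite -big_split; apply: eq_bigr => x _ /=; rewrite -mulrDl subrKC mul1r.
by apply: lerD; apply: log_sum_le.
Qed.

Lemma massof_ge0 p A : (forall x, 0 <= p x) -> 0 <= massof p A.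
Proof. by move=> p0; apply: sumr_ge0. Qed.

Lemma le_massof p A x : (forall y, 0 <= p y) -> x \in A -> p x <= massof p A.
Proof.
by move=> p0 xA; rewrite /massof (bigD1 x) //= lerDl sumr_ge0.
Qed.

Lemma massofC p A : is_dist p -> massof p (~: A) = 1 - massof p A.
Proof.
move=> [_ p1]; rewrite /massof -p1 [in RHS](bigID (mem A)) /= addrAC subrr add0r.
by apply: eq_bigl => x; rewrite inE.
Qed.

Lemma massof_le1 p A : is_dist p -> massof p A <= 1.
Proof.
move=> dp; rewrite -subr_ge0 -massofC //; apply: massof_ge0; by case: dp.
Qed.

Lemma wsum_indicator p A (t s : R) : is_dist p ->
  \sum_x (t + s * (x \in A)%:R) * p x = t + s * massof p A.
Proof.
move=> [_ p1]; under eq_bigr do rewrite mulrDl -mulrA.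
rewrite big_split /= -mulr_sumr -mulr_sumr p1 mulr1 /massof [in RHS]big_mkcond /=.
by congr (_ + _ * _); apply: eq_bigr => x _; case: (x \in A); rewrite ?mul1r ?mul0r.
Qed.

Lemma pmax_ge0 P : 0 <= pmax P.
Proof. by rewrite /pmax bigmax_idl le_max lexx. Qed.

Lemma pmax_le_massof P A : (forall x, 0 <= P x) ->
  pmax P <= Num.max (massof P A) (massof P (~: A)).
Proof.
move=> P0; apply: bigmax_le => [|x _]; first by rewrite le_max massof_ge0.
rewrite le_max; have [xA|xnA] := boolP (x \in A).
  by rewrite le_massof.
by rewrite (@le_massof _ (~: A)) ?orbT // inE.
Qed.

Lemma pmax_le1 P : is_dist P -> pmax P <= 1.
Proof.
move=> dP; have /le_trans-> // := pmax_le_massof (finset.set0 : {set V}) (proj1 dP).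
by rewrite ge_max !massof_le1.
Qed.

(* An excess over the capacity mass forces [P A] below it: otherwise [pmax P <= P A] and [pi A > 1]. *)
Lemma massof_le_capacity pi P A : is_dist pi -> is_dist P ->
  1 - pmax P < massof pi A - massof P A -> massof P A <= 1 - pmax P.
Proof.
move=> dpi dP excess.
have := pmax_le_massof A (proj1 dP); rewrite le_max massofC // => /orP[]; last lra.
have := massof_le1 A dpi; lra.
Qed.

(* Affine weights [t + s 1_A] with [P]-mean [q] and [pi]-mean [l] when [P A = b], [pi A = b + l]. *)
Lemma test_weights (b l q : R) : 0 <= b <= q -> q < l -> l <= 1 - b ->
  exists t s : R, [/\ 0 <= t, 0 <= s, t + s <= 1,
                      t + s * (b + l) = l & t + s * b = q].
Proof.
move=> /andP[b0 bq] ql lb.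
have l_gt0 : 0 < l by lra.
set s := (l - q) / l.
have sl : s * l = l - q by rewrite divfK ?gt_eqF.
have s0 : 0 <= s by rewrite /s; apply: divr_ge0; lra.
have s1 : s <= 1 by rewrite /s ler_pdivrMr // mul1r; lra.
exists (q - b * s), s; split => //.
- nra.
- rewrite -(ler_pM2r l_gt0) mul1r mulrDl mulrBl -mulrA sl.
  have : 0 <= (q - b) * (1 - b - l) + b * (1 - b) by nra.
  nra.
- lra.
- lra.
Qed.

Lemma exists_test_of_excess pi P A : is_dist pi -> is_dist P ->
  1 - pmax P < massof pi A - massof P A ->
  exists w : V -> R, [/\ forall x, 0 <= w x <= 1,
    \sum_x w x * pi x = massof pi A - massof P A &
    \sum_x w x * P x = 1 - pmax P].
Proof.
move=> dpi dP excess.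
have bq := massof_le_capacity dpi dP excess.
have b0 : 0 <= massof P A by apply: massof_ge0; case: dP.
have lb : massof pi A - massof P A <= 1 - massof P A.
  by rewrite lerD2r massof_le1.
have [t [s [t0 s0 ts1 Epi EP]]] := test_weights (introT andP (conj b0 bq)) excess lb.
exists (fun x => t + s * (x \in A)%:R); split.
- move=> x; case: (x \in A); rewrite ?mulr1n ?mulr0n ?mulr1 ?mulr0 ?addr0; lra.
- by rewrite wsum_indicator // -Epi addrCA subrr addr0.
- by rewrite wsum_indicator.
Qed.

End Divergence.

Local Open Scope classical_set_scope.

Section Capacity.
Variables (R : realType) (V : finType).
Implicit Types (pi P : V -> R) (A : {set V}).

Lemma excess_le_dkl_sup P pi A : is_dist P -> is_dist pi ->
  massof pi A - massof P A <=
    sup [set l : R | 0 <= l <= 1 /\ (dkl l (1 - pmax P) <= KL pi P)%E].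
Proof.
move=> dP dpi; set q := 1 - pmax P; set S := [set l : R | _].
have S_ub : has_ubound S by exists 1 => l [/andP[_ ->]].
have q01 : 0 <= q <= 1 by rewrite subr_ge0 pmax_le1 // gerBl pmax_ge0.
have Sq : S q.
  split=> //; have := dkl_wsum_le_KL dpi dP (fun _ => q01).
  by rewrite -!mulr_sumr (proj2 dpi) (proj2 dP) mulr1.
have [le_q|gt_q] := leP (massof pi A - massof P A) q.
  exact: le_trans le_q (ub_le_sup S_ub Sq).
apply: (ub_le_sup S_ub); split.
  have := massof_le1 A dpi; have := massof_ge0 A (proj1 dP); lra.
rewrite /q; have [w [w01 <- <-]] := exists_test_of_excess dpi dP gt_q.
exact: dkl_wsum_le_KL.
Qed.

Lemma KL_le_abs_cont pi P (C : R) : (forall x, 0 <= P x) ->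
  (KL pi P <= C%:E)%E -> abs_cont pi P.
Proof.
move=> P0 KL_le_C; apply: contrapT => /(KL_not_abs_cont P0) KLy.
by move: KL_le_C; rewrite KLy leNgt ltey.
Qed.

Lemma capacity_gt0_of_excess pi P A (C : R) : is_dist pi -> is_dist P ->
  (KL pi P <= C%:E)%E -> 1 - pmax P < massof pi A - massof P A ->
  0 < 1 - pmax P.
Proof.
move=> dpi dP KL_le_C excess.
have [w [w01 wpi <-]] := exists_test_of_excess dpi dP excess.
apply: (abs_cont_wsum (proj1 dpi) (proj1 dP)).
- by move=> x; case/andP: (w01 x).
- exact: KL_le_abs_cont (proj1 dP) KL_le_C.
- by rewrite wpi (le_lt_trans _ excess) // subr_ge0 pmax_le1.
Qed.

Lemma excess_mul_lnV_le pi P A (C : R) : is_dist pi -> is_dist P ->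
  (KL pi P <= C%:E)%E -> 1 - pmax P < massof pi A - massof P A ->
  (massof pi A - massof P A) * - ln (1 - pmax P) <= C + 1.
Proof.
move=> dpi dP KL_le_C excess.
have q_gt0 := capacity_gt0_of_excess dpi dP KL_le_C excess.
have [w [w01 wpi wP]] := exists_test_of_excess dpi dP excess.
move: excess q_gt0 wpi wP.
set q := 1 - pmax P; set l := massof pi A - massof P A => excess q_gt0 wpi wP.
have l_le1 : l <= 1.
  by rewrite /l; have := massof_le1 A dpi; have := massof_ge0 A (proj1 dP); lra.
have l01 : 0 <= l <= 1 by apply/andP; split; lra.
have q01 : 0 < q < 1 by apply/andP; split; lra.
have := dkl_wsum_le_KL dpi dP w01; rewrite wpi wP dklE //; last by move=> _; lra.
move=> /le_trans/(_ KL_le_C); rewrite lee_fin.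
have := dkl_ge_log_inv l01 q01; rewrite mulrN; lra.
Qed.

Lemma excess_small_capacity (C eps : R) : 0 <= C -> 0 < eps ->
  exists2 eta : R, 0 < eta & forall P pi A, is_dist P -> is_dist pi ->
    1 - pmax P < eta -> (KL pi P <= C%:E)%E ->
    massof pi A - massof P A <= eps.
Proof.
move=> C0 eps_gt0; set M := (C + 1) / eps.
have M0 : 0 <= M by rewrite /M divr_ge0 //; lra.
exists (Num.min eps (expR (- M))); first by rewrite lt_min eps_gt0 expR_gt0.
move=> P pi A dP dpi; rewrite lt_min => /andP[q_lt_eps q_lt_exp] KL_le_C.
rewrite leNgt; apply/negP => excess_gt_eps.
have excess := lt_trans q_lt_eps excess_gt_eps.
have q_gt0 := capacity_gt0_of_excess dpi dP KL_le_C excess.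
have lnq : ln (1 - pmax P) < - M by rewrite -ltr_expR lnK ?posrE.
have : eps * M < (massof pi A - massof P A) * - ln (1 - pmax P).
  by apply: ltr_pM; lra.
rewrite /M mulrCA divff ?gt_eqF // mulr1.
have := excess_mul_lnV_le dpi dP KL_le_C excess; lra.
Qed.

End Capacity.

Theorem theorem1 (R : realType) (V : finType) :
  (forall (P pi : V -> R) (A : {set V}),
     is_dist P -> is_dist pi ->
     massof pi A - massof P A <=
       sup [set l : R | 0 <= l <= 1 /\
                        (dkl l (1 - pmax P) <= KL pi P)%E])
  /\
  (forall C : R, 0 <= C ->
   forall eps : R, 0 < eps ->
   exists eta : R, 0 < eta /\
     forall (P pi : V -> R) (A : {set V}),
       is_dist P -> is_dist pi ->
       1 - pmax P < eta ->
       (KL pi P <= C%:E)%E ->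
       massof pi A - massof P A <= eps).
Proof.
split; first exact: excess_le_dkl_sup.
move=> C C0 eps eps_gt0; have [eta eta_gt0 small] := excess_small_capacity V C0 eps_gt0.
by exists eta.
Qed.
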